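(* Consider the $T$-round online first-price auction problem described in the context. For any $V_T\in\left[\frac{36}{T},\frac{T}{4}\right]$, \[ \inf_{\pi\in\Pi}\ \sup_{(v_t,m_t)_{t=1}^T\in\mathcal{V}}\mathbb{E}[\mathrm{DR}_T(\pi)]\ge\frac{\sqrt{TV_T}}{16}. \]
   Context: Online first-price auction over $T$ rounds: at each round $t$ the learner observes a private value $v_t\in[0,1]$, submits a bid $b_t\in[0,1]$, then observes $m_t\in[0,1]$, the highest bid of the other bidders, and receives reward $r(b_t;v_t,m_t)$ with $r(b;v,m)\coloneqq(v-b)\mathbbm{1}(b\ge m)$. An admissible policy $\pi\in\Pi$ is a sequence of measurable functions $\pi_t$ with $b_t=\pi_t((v_s,m_s)_{s=1}^{t-1},v_t,U)$, where $U$ is the learner's internal random variable. The expected dynamic regret is $\mathbb{E}[\mathrm{DR}_T(\pi)]\coloneqq\sum_{t=1}^T\max\{v_t-m_t,0\}-\sum_{t=1}^T\mathbb{E}[r(b_t;v_t,m_t)]$. $\mathcal{V}\coloneqq\{(v_t,m_t)_{t=1}^T\in[0,1]^{2T}:\sum_{t=2}^T|m_t-m_{t-1}|\le V_T\}$. *)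

From HB Require Import structures.
From mathcomp Require Import all_boot all_order all_algebra.
From mathcomp Require Import all_classical all_reals all_analysis.
Set Implicit Arguments. Unset Strict Implicit. Unset Printing Implicit Defensive.
Import Order.TTheory GRing.Theory Num.Theory.
Local Open Scope classical_set_scope.
Local Open Scope ring_scope.

Section Auction.
Context {R : realType}.

Definition reward (b v m : R) : R := (v - b) * (((m <= b)%R : bool) : nat)%:R.

(* Rounds are indexed 0, ..., T-1 (paper: 1, ..., T).
   history v m t = (v_s, m_s) for the rounds s strictly before t. *)
Definition history (v m : nat -> R) (t : nat) : seq (R * R) :=
  [seq (v s, m s) | s <- iota 0 t].

(* A policy: pi t (past observations) v_t U  is the bid b_t;
   U is the learner's internal randomness, an element of a probability
   space Omega. *)
Definition policy (Omega : Type) := nat -> seq (R * R) -> R -> Omega -> R.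

Definition bid {Omega} (pi : policy Omega) (v m : nat -> R) (t : nat) (w : Omega) : R :=
  pi t (history v m t) (v t) w.

Definition admissible {d} {Omega : measurableType d} (pi : policy Omega) : Prop :=
  forall t h x, measurable_fun setT (pi t h x) /\
                (forall w, 0 <= pi t h x w <= 1).

Definition exp_dyn_regret {d} {Omega : measurableType d}
  (P : probability Omega R) (T : nat) (pi : policy Omega) (v m : nat -> R) : \bar R :=
  ((\sum_(t < T) Num.max (v t - m t) 0)%:E -
   \sum_(t < T) \int[P]_w (reward (bid pi v m t w) (v t) (m t))%:E)%E.

Definition in_V (T : nat) (VT : R) (v m : nat -> R) : Prop :=
  (forall t, (t < T)%N -> 0 <= v t <= 1 /\ 0 <= m t <= 1) /\
  \sum_(1 <= t < T) `|m t - m t.-1| <= VT.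

End Auction.

(* The adversary fixes every value to 1 and posts competing prices m_t in {0, δ},
   δ = sqrt(T V_T) / (8 T).  Since the history is a deterministic function of the
   past prices, the law of the bid b_t is known before round t, and with
   q_t = P(b_t >= δ) the adversary posts m_t = δ when q_t <= 1/2 and the variation
   budget allows it, and m_t = 0 otherwise.  A round with m_t = δ costs the learner
   at least (1 - δ)(1 - q_t) >= 1/4; a round with m_t = 0 costs at least δ q_t, which
   is >= δ/2 while the budget is not exhausted.  The budget is "twice the sum of the
   prices so far is at most V_T", which bounds the variation.  Either it never binds
   and the regret is at least T δ / 2 = sqrt(T V_T) / 16, or more than V_T / (2 δ) - 1
   rounds have m_t = δ, and the regret exceeds sqrt(T V_T) - 1/4. *)

From HB Require Import structures.
From mathcomp Require Import all_boot all_order all_algebra.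
From mathcomp Require Import all_classical all_reals all_analysis.
From mathcomp Require Import measurable_realfun ring lra.
Import Order.TTheory GRing.Theory Num.Theory.
Local Open Scope classical_set_scope.
Local Open Scope ring_scope.

Lemma sum_dist_pred_le {R : numDomainType} (u : nat -> R) (n : nat) :
  \sum_(1 <= t < n) `|u t - u t.-1| <= 2 * \sum_(t < n) `|u t|.
Proof.
case: n => [|n]; first by rewrite big_geq // big_ord0 mulr0.
apply: (le_trans (ler_sum _ (fun t _ => ler_normB (u t) (u t.-1)))).
rewrite big_split /= mulr2n mulrDl mul1r -(big_mkord xpredT (fun t => `|u t|)).
apply: lerD; first by rewrite [leRHS](big_ltn (ltn0Sn n)) lerDr.
by rewrite big_add1 /= [leRHS]big_nat_recr //= lerDl.
Qed.

Section AdaptiveSequence.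
Context {T : Type} (next : nat -> seq T -> T).

Fixpoint adaptive_prefix (n : nat) : seq T :=
  if n is n'.+1 then rcons (adaptive_prefix n') (next n' (adaptive_prefix n'))
  else [::].

Definition adaptive (t : nat) : T := next t (adaptive_prefix t).

Lemma adaptive_prefixE (n : nat) : adaptive_prefix n = map adaptive (iota 0 n).
Proof.
elim: n => // n IH.
by rewrite -addn1 iotaD map_cat -IH cats1 add0n addn1.
Qed.

End AdaptiveSequence.

Lemma integral_le_split {R : realType} {d : measure_display} {Omega : measurableType d}
    (P : probability Omega R) (f : Omega -> R) (A : set Omega) (a c : R) :
  measurable A -> measurable_fun setT f -> (forall w, 0 <= f w) ->
  (forall w, A w -> f w <= a) -> (forall w, ~ A w -> f w <= c) ->
  (\int[P]_w (f w)%:E <= (a * fine (P A) + c * (1 - fine (P A)))%:E)%E.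
Proof.
move=> mA mf f0 fa fc.
have mfE : measurable_fun [set: Omega] (EFin \o f) by exact/measurable_EFinP.
have le_integral_cst B b : measurable B -> (forall w, B w -> f w <= b) ->
    (\int[P]_(w in B) (f w)%:E <= b%:E * P B)%E.
  move=> mB fb; rewrite -integral_cst //; apply: ge0_le_integral => //.
  - by move=> w _; rewrite lee_fin.
  - exact: measurable_funS mfE.
rewrite -(setUv A) ge0_integral_setU //; last 4 first.
- exact: measurableC.
- by rewrite setUv.
- by move=> w _; rewrite lee_fin.
- by rewrite disj_set2E setICr.
rewrite EFinD !EFinM EFinB fineK ?fin_num_measure // -probability_setC //.
by apply: leeD; apply: le_integral_cst => //; exact: measurableC.
Qed.

Lemma rewardE {R : realType} (b v m : R) : reward b v m = if m <= b then v - b else 0.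
Proof. by rewrite /reward; case: ifP; rewrite ?mulr1 ?mulr0. Qed.

Section BidReward.
Context {R : realType} {d : measure_display} {Omega : measurableType d}.
Variables (P : probability Omega R) (g : Omega -> R).
Hypotheses (mg : measurable_fun setT g) (g01 : forall w, 0 <= g w <= 1).

Lemma measurable_reward (v m : R) : measurable_fun setT (fun w => reward (g w) v m).
Proof.
under eq_fun do rewrite rewardE.
apply: measurable_fun_ifT; first exact: measurable_fun_ler.
  exact: measurable_funB.
exact: measurable_cst.
Qed.

Lemma reward_unit_ge0 (w : Omega) (m : R) : 0 <= reward (g w) 1 m.
Proof. by rewrite rewardE; case: ifP; rewrite // subr_ge0; case/andP: (g01 w). Qed.

Variable del : R.
Let A := [set w | del <= g w].

Lemma measurable_high_bid : measurable A.
Proof. by rewrite -[A]setTI; exact: (measurable_fun_ler (measurable_cst del) mg). Qed.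

Lemma integral_reward_price_le :
  (\int[P]_w (reward (g w) 1 del)%:E <= ((1 - del) * fine (P A))%:E)%E.
Proof.
rewrite -[X in (_ <= X%:E)%E]addr0 -(mul0r (1 - fine (P A))).
apply: integral_le_split measurable_high_bid (measurable_reward _ _) _ _ _.
- by move=> w; exact: reward_unit_ge0.
- by move=> w /= Aw; rewrite rewardE Aw lerB.
- by move=> w /= nAw; rewrite rewardE ifF //; apply/negP.
Qed.

Lemma integral_reward_zero_price_le :
  (\int[P]_w (reward (g w) 1 0)%:E <= (1 - del * fine (P A))%:E)%E.
Proof.
have -> : 1 - del * fine (P A) = (1 - del) * fine (P A) + 1 * (1 - fine (P A)).
  by ring.
apply: integral_le_split measurable_high_bid (measurable_reward _ _) _ _ _.
- by move=> w; exact: reward_unit_ge0.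
- by move=> w /= Aw; rewrite rewardE; case/andP: (g01 w) => -> _; rewrite lerB.
- by move=> w _; rewrite rewardE; case/andP: (g01 w) => g0 _; rewrite g0 lerBlDr lerDl.
Qed.

End BidReward.

Section Adversary.
Context {R : realType} {d : measure_display} {Omega : measurableType d}.
Variables (P : probability Omega R) (pi : @policy R Omega) (del VT : R).

Definition price_history (l : seq R) : seq (R * R) := [seq (1, x) | x <- l].

Definition high_bid_prob (t : nat) (l : seq R) : R :=
  fine (P [set w | del <= pi t (price_history l) 1 w]).

Definition next_price (t : nat) (l : seq R) : R :=
  if (high_bid_prob t l <= 1/2) && (2 * (\sum_(x <- l) x + del) <= VT) then del else 0.

Local Notation m := (adaptive next_price).
Local Notation q t := (high_bid_prob t (adaptive_prefix next_price t)).

Lemma history_adaptive (t : nat) :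
  history (fun=> 1) m t = price_history (adaptive_prefix next_price t).
Proof. by rewrite /history adaptive_prefixE /price_history -map_comp. Qed.

Lemma sum_adaptive_prefix (t : nat) :
  \sum_(x <- adaptive_prefix next_price t) x = \sum_(s < t) m s.
Proof. by rewrite adaptive_prefixE big_map -(big_mkord xpredT) /index_iota subn0. Qed.

Lemma adaptiveE (t : nat) :
  m t = if (q t <= 1/2) && (2 * (\sum_(s < t) m s + del) <= VT) then del else 0.
Proof. by rewrite -sum_adaptive_prefix. Qed.

Hypothesis del_gt0 : 0 < del.

Lemma adaptive_ge0 (t : nat) : 0 <= m t.
Proof. by rewrite adaptiveE; case: ifP => // _; exact: ltW. Qed.

Lemma adaptive_le_del (t : nat) : m t <= del.
Proof. by rewrite adaptiveE; case: ifP => // _; exact: ltW. Qed.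

Lemma twice_sum_adaptive_le (t : nat) : 0 <= VT -> 2 * \sum_(s < t) m s <= VT.
Proof.
move=> VT_ge0; elim: t => [|t IH]; first by rewrite big_ord0 mulr0.
rewrite big_ord_recr /= [m t]adaptiveE.
by case: ifP => [/andP[_ //]|_]; rewrite addr0.
Qed.

Lemma adaptive_in_V (T : nat) : 0 <= VT -> del <= 1 -> in_V T VT (fun=> 1) m.
Proof.
move=> VT_ge0 del_le1; split.
  by move=> t _; rewrite ler01 lexx adaptive_ge0 (le_trans (adaptive_le_del t)).
apply: le_trans (sum_dist_pred_le m T) _.
under eq_bigr do rewrite ger0_norm ?adaptive_ge0 //.
exact: twice_sum_adaptive_le.
Qed.

Definition round_regret_lb (t : nat) : R :=
  if m t == 0 then del * q t else (1 - del) * (1 - q t).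

Hypothesis del_le_half : del <= 1/2.

Lemma expected_reward_le (t : nat) : admissible pi ->
  (\int[P]_w (reward (bid pi (fun=> 1) m t w) 1 (m t))%:E <=
   (Num.max (1 - m t) 0 - round_regret_lb t)%:E)%E.
Proof.
move=> adm; rewrite /bid history_adaptive /round_regret_lb.
have [mg g01] := adm t (price_history (adaptive_prefix next_price t)) 1.
have := adaptiveE t; case: ifP => _ ->.
  rewrite (gt_eqF del_gt0) max_l ?subr_ge0; last by move: del_le_half; lra.
  apply: le_trans (integral_reward_price_le P _ mg g01 del) _.
  by rewrite lee_fin /high_bid_prob; lra.
rewrite eqxx subr0 max_l ?ler01 //.
apply: le_trans (integral_reward_zero_price_le P _ mg g01 del) _.
by rewrite lee_fin /high_bid_prob; lra.
Qed.

Lemma high_bid_prob_ge0 (t : nat) (l : seq R) : 0 <= high_bid_prob t l.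
Proof. exact/fine_ge0/measure_ge0. Qed.

Lemma round_regret_lb_ge_price (t : nat) : m t / (4 * del) <= round_regret_lb t.
Proof.
rewrite /round_regret_lb; have := adaptiveE t; case: ifP => [/andP[q_le _]|_] ->.
  have -> : del / (4 * del) = 1/4 by field; exact: lt0r_neq0.
  rewrite (gt_eqF del_gt0); move: del_le_half; nra.
by rewrite eqxx mul0r mulr_ge0 ?high_bid_prob_ge0 // ltW.
Qed.

Lemma round_regret_lb_ge_half (t : nat) :
  2 * (\sum_(s < t) m s + del) <= VT -> del / 2 <= round_regret_lb t.
Proof.
move=> budget; rewrite /round_regret_lb; have := adaptiveE t.
case: ifP => [/andP[q_le _]|cond] ->.
  rewrite (gt_eqF del_gt0); move: del_le_half; nra.
move: cond; rewrite budget andbT eqxx => /negbT; rewrite -ltNge => q_gt.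
move: del_gt0; nra.
Qed.

Lemma sum_round_regret_lb_ge (n : nat) :
  Num.min (n%:R * del / 2) (VT / (8 * del) - 1/4) <= \sum_(t < n) round_regret_lb t.
Proof.
have [budget | overspent] := leP (2 * (\sum_(s < n) m s + del)) VT.
  have spent_mono t : (t <= n)%N -> \sum_(s < t) m s <= \sum_(s < n) m s.
    move=> tn; rewrite -!(big_mkord xpredT).
    exact: (nondecreasing_series (fun k _ _ => adaptive_ge0 k)) tn.
  rewrite ge_min; apply/orP; left.
  have half_le (t : 'I_n) : true -> del / 2 <= round_regret_lb t.
    move=> _; apply: round_regret_lb_ge_half; apply: le_trans budget.
    by rewrite ler_pM2l // lerD2r spent_mono // ltnW.
  apply: le_trans (ler_sum _ half_le).
  by rewrite sumr_const card_ord -[leRHS]mulr_natl mulrA.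
rewrite ge_min; apply/orP; right.
apply: le_trans (ler_sum _ (fun (t : 'I_n) _ => round_regret_lb_ge_price t)).
have -> : VT / (8 * del) - 1/4 = (VT - 2 * del) / (8 * del).
  by field; exact: lt0r_neq0.
rewrite -mulr_suml ler_pdivrMr ?mulr_gt0 //.
have -> : (\sum_(t < n) m t) / (4 * del) * (8 * del) = 2 * \sum_(t < n) m t.
  by field; exact: lt0r_neq0.
by move: overspent; lra.
Qed.

Lemma exp_dyn_regret_adaptive_ge (T : nat) : admissible pi ->
  ((\sum_(t < T) round_regret_lb t)%:E <= exp_dyn_regret P T pi (fun=> 1%R) m)%E.
Proof.
move=> adm; rewrite /exp_dyn_regret lee_suber_addr //.
have reward_le (t : 'I_T) : true -> _ := fun _ => expected_reward_le t adm.
apply: le_trans (leeD2l _ (lee_sum _ reward_le)) _.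
by rewrite sumEFin -EFinD lee_fin sumrB addrCA gerDl subrr.
Qed.

End Adversary.

Lemma price_level_bounds {R : rcfType} {T : nat} {VT : R} :
  (0 < T)%N -> 36 / T%:R <= VT -> VT <= T%:R / 4 ->
  let s := Num.sqrt (T%:R * VT) in let del := s / (8 * T%:R) in
  [/\ 0 < del, del <= 1/2 & s / 16 <= Num.min (T%:R * del / 2) (VT / (8 * del) - 1/4)].
Proof.
move=> T_gt0 VT_ge VT_le s del.
have T_pos : 0 < T%:R :> R by rewrite ltr0n.
have TVT_ge : 36 <= T%:R * VT by rewrite mulrC -ler_pdivrMr.
have s_sq : s * s = T%:R * VT by rewrite -expr2 sqr_sqrtr // (le_trans _ TVT_ge).
have s_ge0 : 0 <= s := sqrtr_ge0 _.
have s_ge6 : 6 <= s by nra.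
have s_le : s <= T%:R / 2.
  have : T%:R * VT <= T%:R * (T%:R / 4) by rewrite ler_pM2l.
  nra.
have VT_del : VT / (8 * del) = s.
  have -> : 8 * del = s / T%:R by rewrite /del; field; exact: lt0r_neq0.
  by rewrite invf_div mulrA [VT * _]mulrC -s_sq mulfK // lt0r_neq0 //; lra.
have T_del : T%:R * del / 2 = s / 16 by rewrite /del; field; exact: lt0r_neq0.
split; first by rewrite divr_gt0 ?mulr_gt0 //; lra.
  by rewrite ler_pdivrMr ?mulr_gt0 //; lra.
by rewrite le_min T_del VT_del lexx /=; lra.
Qed.

Theorem theorem4 (R : realType) (d : measure_display) (Omega : measurableType d)
  (P : probability Omega R) (T : nat) (VT : R) :
  (0 < T)%N ->
  36 / T%:R <= VT -> VT <= T%:R / 4 ->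
  forall pi : policy Omega, admissible pi ->
  ((Num.sqrt (T%:R * VT) / 16)%:E <=
   ereal_sup [set x | exists v m : nat -> R, in_V T VT v m /\
                        x = exp_dyn_regret P T pi v m])%E.
Proof.
move=> T_gt0 VT_ge VT_le pi adm.
have VT_gt0 : 0 < VT by apply: lt_le_trans VT_ge; rewrite divr_gt0 ?ltr0n.
have /= [del_gt0 del_le_half s_le] := price_level_bounds T_gt0 VT_ge VT_le.
set del := _ / (8 * T%:R) in del_gt0 del_le_half s_le *.
set m := adaptive (next_price P pi del VT).
apply: le_trans (ereal_sup_ubound _); last first.
  by exists (fun=> 1), m; split; [apply: adaptive_in_V; lra|].
apply: le_trans (exp_dyn_regret_adaptive_ge P pi del VT del_gt0 del_le_half T adm).
rewrite lee_fin (le_trans s_le) //.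
exact: sum_round_regret_lb_ge.
Qed.
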